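(* Let $H$ be a connected, locally finite graph. Then $\beta(P_{2\infty}\,\Box\, H)=2$ if and only if $H$ is the trivial graph $K_1$.
   Context: $P_{2\infty}$ is the two-way infinite path, with vertex set $\mathbb Z$ and $i,j$ adjacent iff $|i-j|=1$. The cartesian product $G\Box H$ has vertex set $V(G)\times V(H)$, where $(a,v)$ is adjacent to $(b,w)$ iff either $a=b$ and $vw\in E(H)$, or $v=w$ and $ab\in E(G)$. $d$ denotes shortest-path distance. A vertex $x$ resolves $u,v$ if $d(u,x)\ne d(v,x)$; a set of vertices is a resolving set if every pair of distinct vertices is resolved by some vertex of it. The metric dimension $\beta$ is the minimum cardinality of a resolving set if a finite one exists, and $\infty$ otherwise. *)

From Stdlib Require Import ZArith List.
Open Scope Z_scope.

Section Graphs.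
Context {V : Type} (adj : V -> V -> Prop).

Definition simple_graph : Prop :=
  (forall u v, adj u v -> adj v u) /\ (forall u, ~ adj u u).

Inductive walk : V -> V -> nat -> Prop :=
| walk0 : forall x, walk x x 0
| walkS : forall x y z n, adj x y -> walk y z n -> walk x z (S n).

Definition connected : Prop :=
  inhabited V /\ forall u v, exists n, walk u v n.

Definition locally_finite : Prop :=
  forall v, exists l : list V, forall w, adj v w -> In w l.

Definition dist_is (u v : V) (n : nat) : Prop :=
  walk u v n /\ forall m, walk u v m -> (n <= m)%nat.

Definition resolves (x u v : V) : Prop :=
  exists n m, dist_is u x n /\ dist_is v x m /\ n <> m.

Definition resolving_set (W : list V) : Prop :=
  forall u v, u <> v -> exists x, In x W /\ resolves x u v.

Definition metric_dim_eq (k : nat) : Prop :=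
  (exists W, NoDup W /\ length W = k /\ resolving_set W) /\
  (forall W, NoDup W -> resolving_set W -> (k <= length W)%nat).

End Graphs.

Definition P2inf_adj (i j : Z) : Prop := Z.abs (i - j) = 1.

Definition cart_adj {A B : Type} (adjG : A -> A -> Prop) (adjH : B -> B -> Prop)
  (p q : A * B) : Prop :=
  (fst p = fst q /\ adjH (snd p) (snd q)) \/ (snd p = snd q /\ adjG (fst p) (fst q)).

From Stdlib Require Import ZArith List Lia Classical.

(* The whole argument rests on the distance formula of the cartesian product,
     d((i,h),(j,g)) = |i - j| + d_H(h,g),
   proved first (after some generic facts on walks and shortest-path distances).
   With it, three explicit "twin" configurations exhibit pairs of vertices that a
   given landmark cannot resolve:
   - (a+1,g), (a-1,g) are not resolved by any landmark in column a; hence no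
     single vertex resolves the product and beta >= 2 for every H;
   - if H has an edge, then any two landmarks leave some pair unresolved (a
     case analysis on whether they share their column or their H-coordinate),
     so beta <> 2 unless H is trivial;
   - if H = K_1, the product is the path Z and {(0,h),(1,h)} resolves it. *)

Section Distances.
Context {V : Type} (adj : V -> V -> Prop).

Lemma walk_app x y z a b :
  walk adj x y a -> walk adj y z b -> walk adj x z (a + b).
Proof.
  induction 1; intros; simpl; [assumption | econstructor; eauto].
Qed.

Lemma walk0_eq x y : walk adj x y 0 -> x = y.
Proof. intro W; inversion W; reflexivity. Qed.

Lemma dist_refl x : dist_is adj x x 0.
Proof. split; [constructor | intros; lia]. Qed.

Lemma dist_unique u v n m : dist_is adj u v n -> dist_is adj u v m -> n = m.
Proof.
  intros [Wn Mn] [Wm Mm]. specialize (Mn m Wm). specialize (Mm n Wn). lia.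
Qed.

Lemma dist_of_walk u v n : walk adj u v n -> exists k, dist_is adj u v k.
Proof.
  induction n as [n IH] using (well_founded_induction lt_wf). intros W.
  destruct (classic (exists m, (m < n)%nat /\ walk adj u v m))
    as [[m [Lt Wm]] | Shortest].
  - exact (IH m Lt Wm).
  - exists n. split; [exact W |]. intros m Wm.
    destruct (Nat.lt_ge_cases m n); [exfalso; eauto | assumption].
Qed.

Lemma geodesic_step h g K :
  dist_is adj h g (S K) -> exists p, adj h p /\ dist_is adj p g K.
Proof.
  intros [W Min]. inversion W as [| ? p ? ? Hp Wp]; subst.
  exists p. split; [exact Hp |]. split; [exact Wp |].
  intros m Wm. specialize (Min (S m) (walkS _ _ _ _ _ Hp Wm)). lia.
Qed.

Lemma equidistant_not_resolved x u v c :
  dist_is adj u x c -> dist_is adj v x c -> ~ resolves adj x u v.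
Proof.
  intros Du Dv [n [m [Dn [Dm Neq]]]]. apply Neq.
  rewrite <- (dist_unique _ _ _ _ Du Dn), <- (dist_unique _ _ _ _ Dv Dm).
  reflexivity.
Qed.

Lemma dist_neighbour h p : simple_graph adj -> adj h p -> dist_is adj p h 1.
Proof.
  intros [Sym Irr] Hp. split.
  - apply walkS with (y := h); [apply Sym; exact Hp | constructor].
  - intros m W. destruct m; [| lia].
    apply walk0_eq in W. subst. exfalso; exact (Irr _ Hp).
Qed.

Lemma connected_dist h g : connected adj -> exists c, dist_is adj h g c.
Proof.
  intros [_ Conn]. destruct (Conn h g) as [n W]. exact (dist_of_walk _ _ _ W).
Qed.

Lemma connected_neighbour (h u v : V) :
  connected adj -> u <> v -> exists p, adj h p.
Proof.
  intros [_ Conn] Nuv.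
  destruct (classic (u = h)) as [<- | Nuh].
  - destruct (Conn u v) as [n W]. destruct W; [contradiction | eauto].
  - destruct (Conn h u) as [n W]. destruct W; [congruence | eauto].
Qed.
End Distances.

Section ProductDistance.
Context {V : Type} (adjH : V -> V -> Prop).
Notation C := (cart_adj P2inf_adj adjH).

Lemma walk_fibre (h : V) n :
  forall i j, Z.abs_nat (i - j) = n -> walk C (i, h) (j, h) n.
Proof.
  induction n as [| n IH]; intros i j Hn.
  - replace j with i by lia. constructor.
  -
    assert (Step : forall k, Z.abs k = 1 -> Z.abs_nat (i + k - j) = n ->
                     walk C (i, h) (j, h) (S n)).
    { intros k Hk Hrest. apply walkS with (y := ((i + k)%Z, h)).
      - right. simpl. unfold P2inf_adj. split; [reflexivity | lia].
      - apply IH, Hrest. }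
    destruct (Z_lt_ge_dec i j); [apply (Step 1%Z) | apply (Step (-1)%Z)]; lia.
Qed.

Lemma walk_copy i (h g : V) m : walk adjH h g m -> walk C (i, h) (i, g) m.
Proof.
  induction 1; [constructor |].
  apply walkS with (y := (i, y)); [left; simpl; auto | assumption].
Qed.

Lemma walk_projection p q n : walk C p q n ->
  exists m, walk adjH (snd p) (snd q) m /\ (Z.abs_nat (fst p - fst q) + m <= n)%nat.
Proof.
  induction 1 as [x | x y z n Hxy W [m [Wm Len]]].
  - exists 0%nat. split; [constructor | lia].
  - destruct Hxy as [[E A] | [E A]].
    + exists (S m). split; [econstructor; eauto | rewrite E; lia].
    + exists m. rewrite E. split; [exact Wm |]. unfold P2inf_adj in A. lia.
Qed.

Lemma dist_product i j (h g : V) c : dist_is adjH h g c ->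
  dist_is C (i, h) (j, g) (Z.abs_nat (i - j) + c).
Proof.
  intros [W Min]. split.
  - eapply walk_app; [apply walk_fibre; reflexivity | apply walk_copy; exact W].
  - intros m Wm. destruct (walk_projection _ _ _ Wm) as [k [Wk Len]]. simpl in *.
    specialize (Min k Wk). lia.
Qed.

(* Distance to a landmark, phrased to absorb arithmetic on the formula. *)
Lemma dist_product_eq i j (h g : V) c d : dist_is adjH h g c ->
  d = (Z.abs_nat (i - j) + c)%nat -> dist_is C (i, h) (j, g) d.
Proof. intros D ->. apply dist_product, D. Qed.
End ProductDistance.

Section Twins.
Context {V : Type} (adjH : V -> V -> Prop).
Hypothesis Hsimple : simple_graph adjH.
Hypothesis Hconn : connected adjH.
Notation C := (cart_adj P2inf_adj adjH).

Lemma vertical_twins a (g h : V) :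
  ~ resolves C (a, h) ((a + 1)%Z, g) ((a - 1)%Z, g).
Proof.
  destruct (connected_dist adjH g h Hconn) as [c D].
  apply (equidistant_not_resolved _ _ _ _ (S c));
    apply (dist_product_eq adjH) with (c := c); auto; lia.
Qed.

Lemma corner_twins a M (h p : V) : adjH h p -> (a <= M)%Z ->
  ~ resolves C (a, h) ((M + 1)%Z, h) (M, p).
Proof.
  intros Hp Le.
  apply (equidistant_not_resolved _ _ _ _ (Z.abs_nat (M + 1 - a))).
  - apply (dist_product_eq adjH) with (c := 0%nat); [apply dist_refl | lia].
  - apply (dist_product_eq adjH) with (c := 1%nat);
      [apply dist_neighbour; assumption | lia].
Qed.

Lemma geodesic_twins a (h p g : V) K :
  dist_is adjH p g K -> dist_is adjH h g (S K) ->
  ~ resolves C (a, g) (a, h) ((a - 1)%Z, p).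
Proof.
  intros Dp Dh.
  apply (equidistant_not_resolved _ _ _ _ (S K)).
  - apply (dist_product_eq adjH) with (c := S K); [exact Dh | lia].
  - apply (dist_product_eq adjH) with (c := K); [exact Dp | lia].
Qed.

(* Landmarks in columns a1 < a2 with distinct H-coordinates leave a pair
   unresolved: the twins along the first edge of a geodesic from h1 to h2. *)
Lemma distinct_landmarks_fail a1 a2 (h1 h2 : V) : (a1 < a2)%Z -> h1 <> h2 ->
  exists u v, u <> v /\ ~ resolves C (a1, h1) u v /\ ~ resolves C (a2, h2) u v.
Proof.
  intros Lt Neq. destruct (connected_dist adjH h1 h2 Hconn) as [[| K] D].
  - destruct D as [W _]. apply walk0_eq in W. contradiction.
  - destruct (geodesic_step adjH _ _ _ D) as [p [Hp Dp]].
    exists (a2, h1), ((a2 - 1)%Z, p).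
    split; [intro E; inversion E; lia |]. split.
    + replace a2 with (a2 - 1 + 1)%Z at 1 by lia.
      apply corner_twins; [exact Hp | lia].
    + exact (geodesic_twins a2 h1 p h2 K Dp D).
Qed.

Lemma two_landmarks_fail (u0 v0 : V) : u0 <> v0 -> forall a1 a2 (h1 h2 : V),
  exists u v, u <> v /\ ~ resolves C (a1, h1) u v /\ ~ resolves C (a2, h2) u v.
Proof.
  intros Nuv a1 a2 h1 h2.
  destruct (Z.eq_dec a1 a2) as [<- | Na].
  - exists ((a1 + 1)%Z, h1), ((a1 - 1)%Z, h1).
    split; [intro E; inversion E; lia |].
    split; apply vertical_twins.
  - destruct (classic (h1 = h2)) as [<- | Nh].
    + destruct (connected_neighbour adjH h1 u0 v0 Hconn Nuv) as [p Hp].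
      exists ((Z.max a1 a2 + 1)%Z, h1), (Z.max a1 a2, p).
      split; [intro E; inversion E; lia |].
      split; apply corner_twins; auto; lia.
    + destruct (Z_lt_ge_dec a1 a2) as [Lt | Ge].
      * exact (distinct_landmarks_fail a1 a2 h1 h2 Lt Nh).
      * destruct (distinct_landmarks_fail a2 a1 h2 h1) as [u [v [Nuv' [R2 R1]]]];
          [lia | auto |].
        exists u, v. auto.
Qed.

Lemma resolving_set_length_ge2 W : resolving_set C W -> (2 <= length W)%nat.
Proof.
  destruct Hconn as [[h0] _]. intros R.
  destruct W as [| [a g] [| w W]]; simpl; try lia.
  - destruct (R (0%Z, h0) (1%Z, h0)) as [x [[] _]]. intro E; inversion E.
  - destruct (R ((a + 1)%Z, g) ((a - 1)%Z, g)) as [x [[<- | []] Rx]].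
    + intro E; inversion E; lia.
    + exfalso. exact (vertical_twins a g g Rx).
Qed.
End Twins.

Lemma Z_abs_determined i j :
  Z.abs_nat (i - 0) = Z.abs_nat (j - 0) ->
  Z.abs_nat (i - 1) = Z.abs_nat (j - 1) -> i = j.
Proof. lia. Qed.

Lemma trivial_factor_resolved {V : Type} (adjH : V -> V -> Prop) (h0 : V) :
  (forall u v : V, u = v) ->
  resolving_set (cart_adj P2inf_adj adjH) ((0%Z, h0) :: (1%Z, h0) :: nil).
Proof.
  intros All [i g] [j g'] Neq.
  rewrite (All g h0), (All g' h0) in *.
  assert (Nij : i <> j) by (intro; subst; auto).
  assert (Landmark : forall k : Z, resolves (cart_adj P2inf_adj adjH) (k, h0) (i, h0) (j, h0)
           \/ Z.abs_nat (i - k) = Z.abs_nat (j - k)).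
  { intro k. destruct (Nat.eq_dec (Z.abs_nat (i - k)) (Z.abs_nat (j - k))) as [E | E];
      [right; exact E | left].
    exists (Z.abs_nat (i - k) + 0)%nat, (Z.abs_nat (j - k) + 0)%nat.
    split; [| split]; [apply dist_product, dist_refl .. | lia]. }
  destruct (Landmark 0%Z) as [R0 | E0]; [exists (0%Z, h0); simpl; auto |].
  destruct (Landmark 1%Z) as [R1 | E1]; [exists (1%Z, h0); simpl; auto |].
  exfalso. exact (Nij (Z_abs_determined i j E0 E1)).
Qed.

Theorem lemma7 (V : Type) (adjH : V -> V -> Prop)
  (Hsimple : simple_graph adjH) (Hconn : connected adjH)
  (Hlf : locally_finite adjH) :
  metric_dim_eq (cart_adj P2inf_adj adjH) 2 <-> (forall u v : V, u = v).
Proof.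
  split.
  -
    intros [[W [_ [Len R]]] _] u0 v0. apply NNPP; intro Nuv.
    destruct W as [| [a1 h1] [| [a2 h2] [|]]]; simpl in Len; try discriminate.
    destruct (two_landmarks_fail adjH Hsimple Hconn u0 v0 Nuv a1 a2 h1 h2)
      as [u [v [Ne [R1 R2]]]].
    destruct (R u v Ne) as [x [[<- | [<- | []]] Rx]]; contradiction.
  -
    intro All. pose proof Hconn as [[h0] _]. split.
    + exists ((0%Z, h0) :: (1%Z, h0) :: nil). split; [| split; [reflexivity |]].
      * constructor; [simpl; intros [E | []]; inversion E |].
        constructor; [auto | constructor].
      * apply trivial_factor_resolved, All.
    + intros W _ R. exact (resolving_set_length_ge2 adjH Hconn W R).
Qed.
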